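(* Let $\mathbb{K}\in\{\mathbb{R},\mathbb{C}\}$, set $c_{\mathbb{K}}=1$ if $\mathbb{K}=\mathbb{R}$ and $c_{\mathbb{K}}=2$ if $\mathbb{K}=\mathbb{C}$, let $d\ge 2$, and let $x_1,\dots,x_N\in\mathbb{K}^d\setminus\{0\}$. Let $\mathcal{HP}_d^+(\mathbb{K})$ be the set of positive definite (symmetric if $\mathbb{K}=\mathbb{R}$, Hermitian if $\mathbb{K}=\mathbb{C}$) $d\times d$ matrices of unit determinant, and define on it $$l(R)=-c_{\mathbb{K}}\,\frac{d-1}{2N}\sum_{n=1}^N \log\left(x_n^\dagger R^{-1}x_n\right).$$ If $R^\star\in\mathcal{HP}_d^+(\mathbb{K})$ maximizes $l$ over $\mathcal{HP}_d^+(\mathbb{K})$, then there exists a constant $c>0$ such that $$R^\star = c\sum_{n=1}^N \frac{x_n x_n^\dagger}{x_n^\dagger (R^\star)^{-1} x_n},$$ i.e. $R^\star$ is (a normalized version of) Tyler's fixed-point estimator. In the paper's interpretation, $l$ is, up to additive constants, the log-likelihood of $N$ i.i.d. samples under a real elliptically symmetric model (resp. a complex elliptically symmetric model, with the samples' circular symmetry taken into account) with correlation matrix $R$, maximized over all radial distributions; hence Tyler's estimator is a maximum likelihood estimate of the correlation matrix over all such models.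
   Context: $X^\dagger$ denotes the transpose of a real matrix/vector or the conjugate transpose of a complex one. A (real) elliptically symmetric distribution on $\mathbb{R}^d$ with correlation matrix $R$ (normalized by $|R|=1$) and radial distribution $Q$ (any probability measure on $\mathbb{R}_+$) is the law of $L(R)\,r\,u$ where $R=L(R)L(R)^\dagger$ is the Cholesky factorization, $r\sim Q$ and $u$ is independent of $r$ and uniform on the unit sphere of $\mathbb{R}^d$; complex elliptically symmetric distributions are defined identically on $\mathbb{C}^d$ with $u$ uniform on the unit sphere of $\mathbb{C}^d$. The paper defines the log-likelihood of a model $P$ for a sampling distribution $S$ as $-H(S|P)$ (minus the KL divergence), with a single sample $x_0$ represented by the Dirac mass at $x_0$ (in the complex case, by the Dirac mass on the phase orbit $\{ux_0: |u|=1\}$ averaged uniformly over phases), and derives that after maximizing over $Q$ the likelihood reduces, up to additive constants, to $l(R)$ above. *)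

From HB Require Import structures.
From mathcomp Require Import all_boot all_order all_algebra.
From mathcomp Require Import reals exp.
From mathcomp Require Import complex.

Set Implicit Arguments.
Unset Strict Implicit.
Unset Printing Implicit Defensive.

Import Order.TTheory GRing.Theory Num.Theory.
Local Open Scope ring_scope.

Definition cadj (R : realType) m n (A : 'M[R[i]]_(m, n)) : 'M[R[i]]_(n, m) :=
  map_mx (@conjc R) A^T.

Definition HPd_real (R : realType) d (A : 'M[R]_d) : Prop :=
  A^T = A /\ (forall x : 'cV[R]_d, x != 0 -> 0 < (x^T *m A *m x) 0 0) /\ \det A = 1.

Definition l_real (R : realType) d N (x : 'I_N -> 'cV[R]_d) (A : 'M[R]_d) : R :=
  - (1 * ((d - 1)%:R / (2 * N)%:R))
    * \sum_(n < N) ln (((x n)^T *m invmx A *m x n) 0 0).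

Definition HPd_cplx (R : realType) d (A : 'M[R[i]]_d) : Prop :=
  cadj A = A /\ (forall x : 'cV[R[i]]_d, x != 0 -> 0 < (cadj x *m A *m x) 0 0)
  /\ \det A = 1.

(* x^dagger R^-1 x is real (and > 0) for R in HP_d^+(C); we take its real part *)
Definition l_cplx (R : realType) d N (x : 'I_N -> 'cV[R[i]]_d) (A : 'M[R[i]]_d) : R :=
  - (2 * ((d - 1)%:R / (2 * N)%:R))
    * \sum_(n < N) ln (complex.Re ((cadj (x n) *m invmx A *m x n) 0 0)).

(** Let [B] be the inverse of the maximiser and [q_n(M) = x_n^† M x_n].  For [det E = 1]
   the matrix [E^† B E] is again the inverse of an admissible matrix, so optimality gives
   [Σ ln q_n(B) <= Σ ln q_n(E^† B E)].  Along [E = 1 + tK] with [det (1 + cK) = 1] for all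
   [c], the bound [ln u - ln v <= u/v - 1] turns this into [0 <= 2αt + βt²] with [β >= 0],
   so the first variation [α = Re tr (K T)] vanishes, where
   [T = Σ_n x_n x_n^† B / q_n(B)].  Conjugated transvections [K = P E_ij P^-1] (i != j) are
   admissible, hence every conjugate of [T] has zero off-diagonal entries and [T] is
   scalar; since [tr T = N], [T = (N/d) 1], i.e. [R* = (d/N) Σ_n x_n x_n^† / q_n(B)].
   The argument is run once over a field with an involution and a real part. *)

From mathcomp Require Import all_boot all_order all_algebra.
From mathcomp Require Import reals exp.
From mathcomp Require Import complex.
From mathcomp Require Import ring lra.
Import Order.TTheory GRing.Theory Num.Theory.
Set Implicit Arguments.
Unset Strict Implicit.
Unset Printing Implicit Defensive.
Local Open Scope ring_scope.

Section Adjoint.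
Variables (F : numFieldType) (conj : {rmorphism F -> F}).
Hypothesis conjK : involutive conj.

Definition adj m n (A : 'M[F]_(m, n)) : 'M[F]_(n, m) := map_mx conj A^T.

Lemma adjM m n p (A : 'M[F]_(m, n)) (B : 'M_(n, p)) : adj (A *m B) = adj B *m adj A.
Proof. by rewrite /adj trmx_mul map_mxM. Qed.

Lemma adjK m n (A : 'M[F]_(m, n)) : adj (adj A) = A.
Proof. by apply/matrixP => i j; rewrite !mxE conjK. Qed.

Lemma adjD m n (A B : 'M[F]_(m, n)) : adj (A + B) = adj A + adj B.
Proof. by apply/matrixP => i j; rewrite !mxE rmorphD. Qed.

Lemma adjZ m n a (A : 'M[F]_(m, n)) : adj (a *: A) = conj a *: adj A.
Proof. by apply/matrixP => i j; rewrite !mxE rmorphM. Qed.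

Lemma adj_mx11 (A : 'M[F]_1) : adj A 0 0 = conj (A 0 0).
Proof. by rewrite !mxE. Qed.

Lemma adj_invmx n (A : 'M[F]_n) : adj (invmx A) = invmx (adj A).
Proof. by rewrite /adj trmx_inv map_invmx. Qed.

Lemma det_adj n (A : 'M[F]_n) : \det (adj A) = conj (\det A).
Proof. by rewrite /adj det_map_mx det_tr. Qed.

Definition hform n (M : 'M[F]_n) (y z : 'cV[F]_n) : F := (adj y *m M *m z) 0 0.

Definition hermmx n (M : 'M[F]_n) := adj M = M.
Definition posdefmx n (M : 'M[F]_n) := forall y : 'cV[F]_n, y != 0 -> 0 < hform M y y.
Definition HPd1 n (M : 'M[F]_n) := hermmx M /\ posdefmx M /\ \det M = 1.

Lemma hform_adj_mul n (M E : 'M[F]_n) y z :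
  hform (adj E *m M *m E) y z = hform M (E *m y) (E *m z).
Proof. by rewrite /hform adjM !mulmxA. Qed.

Lemma hformC n (M : 'M[F]_n) y z : hermmx M -> conj (hform M y z) = hform M z y.
Proof. by move=> hM; rewrite /hform -adj_mx11 !adjM adjK hM mulmxA. Qed.

Lemma hform_shift n (M : 'M[F]_n) y z s : hermmx M -> conj s = s ->
  hform M (y + s *: z) (y + s *: z)
  = hform M y y + s * (hform M y z + conj (hform M y z)) + s ^+ 2 * hform M z z.
Proof.
move=> hM cs; rewrite hformC // /hform adjD adjZ cs.
rewrite !(mulmxDl, mulmxDr) -!scalemxAl -!scalemxAr !mxE.
ring.
Qed.

Lemma posdefmx_hform_ge0 n (M : 'M[F]_n) y : posdefmx M -> 0 <= hform M y y.
Proof.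
move=> pM; have [->|y0] := eqVneq y 0; last exact/ltW/pM.
by rewrite /hform mulmx0 mxE.
Qed.

Lemma unitmx_mul_neq0 n (A : 'M[F]_n) (y : 'cV_n) : A \in unitmx -> y != 0 -> A *m y != 0.
Proof. by move=> uA; apply: contraNneq => Ay0; rewrite -(mulKmx uA y) Ay0 mulmx0. Qed.

Lemma HPd1_unitmx n (M : 'M[F]_n) : HPd1 M -> M \in unitmx.
Proof. by case=> _ [_ detM]; rewrite unitmxE detM unitr1. Qed.

Lemma HPd1_adj_mul n (M E : 'M[F]_n) : HPd1 M -> \det E = 1 -> HPd1 (adj E *m M *m E).
Proof.
case=> hM [pM detM] detE; have uE : E \in unitmx by rewrite unitmxE detE unitr1.
split; first by rewrite /hermmx !adjM adjK hM mulmxA.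
split; first by move=> y y0; rewrite hform_adj_mul; exact/pM/unitmx_mul_neq0.
by rewrite !det_mulmx det_adj detE detM rmorph1 !mulr1.
Qed.

Lemma HPd1_invmx n (M : 'M[F]_n) : HPd1 M -> HPd1 (invmx M).
Proof.
move=> HM; have uM := HPd1_unitmx HM; case: HM => hM [pM detM].
have hMV : hermmx (invmx M) by rewrite /hermmx adj_invmx hM.
split=> //; split; last by rewrite det_inv detM invr1.
move=> y y0; have uMV : invmx M \in unitmx by rewrite unitmx_inv.
have := pM _ (unitmx_mul_neq0 uMV y0).
by rewrite /hform adjM hMV !mulmxA mulmxKV.
Qed.

End Adjoint.

Section Transvection.
Variables (F : comUnitRingType) (n : nat).
Implicit Types (i j : 'I_n) (c : F) (T P : 'M[F]_n).

Lemma det_transvection_lt i j c : (j < i)%N -> \det (1%:M + c *: delta_mx i j) = 1.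
Proof.
move=> lt_ji; rewrite det_trig; last first.
  apply/is_trig_mxP => k l lt_kl; rewrite !mxE -val_eqE ltn_eqF // add0r.
  case: (k =P i) (l =P j) => [ki|_] [lj|_]; rewrite ?mulr0 //.
  by move: lt_ji; rewrite -ki -lj ltnNge (ltnW lt_kl).
rewrite big1 // => k _; rewrite !mxE eqxx.
case: (k =P i) (k =P j) => [->|_] [ij|_]; rewrite ?mulr0 ?addr0 //.
by move: lt_ji; rewrite ij ltnn.
Qed.

Lemma det_transvection i j c : i != j -> \det (1%:M + c *: delta_mx i j) = 1.
Proof.
rewrite neq_ltn => /orP [lt_ij|lt_ji]; last exact: det_transvection_lt.
by rewrite -det_tr linearD /= trmx1 linearZ /= trmx_delta det_transvection_lt.
Qed.

Lemma det_conj_transvection P i j c : P \in unitmx -> i != j ->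
  \det (1%:M + c *: (P *m delta_mx i j *m invmx P)) = 1.
Proof.
move=> uP ij.
have -> : 1%:M + c *: (P *m delta_mx i j *m invmx P)
          = P *m (1%:M + c *: delta_mx i j) *m invmx P.
  by rewrite mulmxDr mulmx1 mulmxDl mulmxV // -scalemxAr -scalemxAl.
by rewrite !det_mulmx det_transvection // mulr1 -det_mulmx mulmxV // det1.
Qed.

Lemma mxtrace_delta_mul i j T : \tr (delta_mx i j *m T) = T j i.
Proof.
by rewrite -(mul_delta_mx (0 : 'I_1)) -mulmxA mxtrace_mulC -rowE -colE trace_mx11 !mxE.
Qed.

Lemma mxtrace_conj_delta_mul P i j T :
  \tr (P *m delta_mx i j *m invmx P *m T) = (invmx P *m T *m P) j i.
Proof. by rewrite -!mulmxA mxtrace_mulC -mulmxA mxtrace_delta_mul mulmxA. Qed.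

Lemma mul_delta_mxE T i j k l : (delta_mx i j *m T) k l = (k == i)%:R * T j l.
Proof.
rewrite mxE (bigD1 j) //= big1 ?addr0 => [|m /negbTE mj]; first by rewrite mxE eqxx andbT.
by rewrite mxE mj andbF mul0r.
Qed.

Lemma mulmx_deltaE T i j k l : (T *m delta_mx i j) k l = T k i * (l == j)%:R.
Proof. by rewrite -[T *m _]trmxK trmx_mul trmx_delta mxE mul_delta_mxE mxE mulrC. Qed.

Lemma scalar_mx_of_conj_offdiag0 T :
  (forall P, P \in unitmx -> forall i j, i != j -> (invmx P *m T *m P) i j = 0) ->
  is_scalar_mx T.
Proof.
move=> offdiag0.
have T_offdiag i j : i != j -> T i j = 0.
  by move=> ij; have := offdiag0 _ (unitmx1 F n) _ _ ij; rewrite invmx1 mul1mx mulmx1.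
(* Conjugating a diagonal [T] by [1 + E_ab] puts [T_aa - T_bb] at position (a, b). *)
have T_diag a b : a != b -> T a a = T b b.
  move=> ab; set D := delta_mx a b : 'M[F]_n.
  have DD : D *m D = 0 by rewrite mul_delta_mx_cond eq_sym (negbTE ab) mulr0n.
  have PV : (1%:M - D) *m (1%:M + D) = 1%:M.
    by rewrite mulmxDr mulmx1 mulmxBl mul1mx DD subr0 subrK.
  have uP : 1%:M + D \in unitmx by case/mulmx1_unit: PV.
  have invP : invmx (1%:M + D) = 1%:M - D.
    by rewrite -[LHS]mul1mx -{1}PV mulmxK.
  have := offdiag0 _ uP _ _ ab; rewrite invP.
  rewrite mulmxDr mulmx1 mulmxBl mul1mx mxE mulmx_deltaE.
  rewrite [(T - _) a b]mxE [(T - _) a a]mxE.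
  rewrite [(- (D *m T)) a b]mxE [(- (D *m T)) a a]mxE !mul_delta_mxE.
  have ba : b != a by rewrite eq_sym.
  rewrite !eqxx (T_offdiag _ _ ab) (T_offdiag _ _ ba) !mul1r mulr1 sub0r subr0.
  by move/eqP; rewrite addrC subr_eq0 => /eqP.
apply/is_scalar_mxP; case: n T offdiag0 T_offdiag T_diag => [|m] T _ T_offdiag T_diag.
  by exists 0; apply/matrixP => -[].
exists (T 0 0); apply/matrixP => i j; rewrite mxE.
have [<-|ij] := eqVneq i j; last by rewrite mulr0n T_offdiag.
by rewrite mulr1n; have [->|i0] := eqVneq i 0; last exact: T_diag.
Qed.
End Transvection.

Lemma lnB_le_divB1 (R : realType) (u v : R) : 0 < u -> 0 < v -> ln u - ln v <= u / v - 1.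
Proof.
move=> u0 v0; rewrite -ln_div ?posrE //.
have := @le_ln1Dx _ (u / v - 1); rewrite addrCA subrr addr0; apply.
by rewrite ltrBrDr addNr divr_gt0.
Qed.

Lemma quadratic_ge0_linear_coef0 (R : realFieldType) (a b : R) : 0 <= b ->
  (forall t, 0 <= t * (2 * a) + t ^+ 2 * b) -> a = 0.
Proof.
move=> b0 ge0; set s := (b + 1)^-1.
have s0 : 0 < s by rewrite invr_gt0; lra.
have sb : s * b = 1 - s.
  by rewrite /s -[b in _ * b](addrK 1) mulrBr mulVf ?mulr1 //; lra.
have : a ^+ 2 * (s * (1 + s)) <= 0.
  have := ge0 (- a * s).
  have -> : - a * s * (2 * a) + (- a * s) ^+ 2 * b
            = - (a ^+ 2 * (s * (1 + s))) + a ^+ 2 * s * (s * b - (1 - s)) by ring.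
  by rewrite sb subrr mulr0 addr0 oppr_ge0.
rewrite pmulr_lle0 ?mulr_gt0 //; last by lra.
by move=> a2_le0; apply/eqP; rewrite -sqrf_eq0 eq_le a2_le0 sqr_ge0.
Qed.

Section TylerFixedPoint.
(* [(F, conj, emb, re)] is [(R, id, id, id)] for real data and
   [(R[i], conjc, real_complex, Re)] for complex data. *)
Variables (R : realType) (F : numFieldType) (conj : {rmorphism F -> F})
  (emb : {rmorphism R -> F}) (re : {additive F -> R}).
Hypotheses (conjK : involutive conj) (conj_emb : forall t, conj (emb t) = emb t)
  (re_embM : forall t z, re (emb t * z) = t * re z)
  (re_conj : forall z, re (conj z) = re z)
  (re_gt0 : forall z, 0 < z -> 0 < re z)
  (emb_re : forall z, 0 < z -> emb (re z) = z)
  (re_nondeg : forall z, (forall s, re (s * z) = 0) -> z = 0).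

Variables (d N : nat) (x : 'I_N -> 'cV[F]_d) (Rs : 'M[F]_d).
Hypotheses (N_gt0 : (0 < N)%N) (d_gt0 : (0 < d)%N) (x_neq0 : forall n, x n != 0)
  (HRs : HPd1 conj Rs).

Local Notation adj := (adj conj).
Local Notation hform := (hform conj).
Local Notation B := (invmx Rs).
Local Notation q M n := (re (hform M (x n) (x n))).

Hypothesis Rs_opt : forall A, HPd1 conj A -> \sum_n ln (q B n) <= \sum_n ln (q (invmx A) n).

Definition tyler_sum := \sum_n (hform B (x n) (x n))^-1 *: (x n *m adj (x n)).

Let re_ge0 z : 0 <= z -> 0 <= re z.
Proof. by rewrite le_eqVlt => /predU1P [<-|/re_gt0/ltW] //; rewrite raddf0. Qed.

Let HPd1_B : HPd1 conj B. Proof. exact: HPd1_invmx. Qed.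

Let q_gt0 M n : posdefmx conj M -> 0 < q M n.
Proof. by move=> pM; apply/re_gt0/pM/x_neq0. Qed.

Let QB_gt0 n : 0 < q B n. Proof. by case: HPd1_B => _ [pB _]; exact: q_gt0. Qed.

Let hformB_real n : hform B (x n) (x n) = emb (q B n).
Proof. by case: HPd1_B => _ [pB _]; rewrite emb_re // pB ?x_neq0. Qed.

Lemma Rs_opt_adj_mul E : \det E = 1 ->
  \sum_n ln (q B n) <= \sum_n ln (q (adj E *m B *m E) n).
Proof.
by move=> detE; rewrite -[adj E *m B *m E]invmxK; exact/Rs_opt/HPd1_invmx/HPd1_adj_mul.
Qed.

Local Notation alpha K n := (re (hform B (x n) (K *m x n))).
Local Notation beta K n := (re (hform B (K *m x n) (K *m x n))).

Lemma q_perturb K t n :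
  q (adj (1%:M + emb t *: K) *m B *m (1%:M + emb t *: K)) n
  = q B n + t * (2 * alpha K n) + t ^+ 2 * beta K n.
Proof.
case: HPd1_B => hB _.
rewrite hform_adj_mul mulmxDl mul1mx -scalemxAl hform_shift // -rmorphXn.
by rewrite !raddfD /= !re_embM raddfD re_conj; ring.
Qed.

Lemma first_variation0 K : (forall c, \det (1%:M + c *: K) = 1) ->
  \sum_n alpha K n / q B n = 0.
Proof.
move=> detK; apply: (@quadratic_ge0_linear_coef0 _ _ (\sum_n beta K n / q B n)).
  apply: sumr_ge0 => n _; apply: divr_ge0; last exact/ltW.
  by case: HPd1_B => _ [pB _]; exact/re_ge0/posdefmx_hform_ge0.
move=> t; set E := 1%:M + emb t *: K.
have [_ [pE _]] := HPd1_adj_mul conjK HPd1_B (detK (emb t)).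
have -> : t * (2 * \sum_n alpha K n / q B n) + t ^+ 2 * (\sum_n beta K n / q B n)
          = \sum_n (q (adj E *m B *m E) n / q B n - 1).
  rewrite !mulr_sumr -big_split; apply: eq_bigr => n _ /=.
  by have := QB_gt0 n; rewrite q_perturb lt0r => /andP [Q0 _]; field.
have := Rs_opt_adj_mul (detK (emb t)); rewrite -subr_ge0 -sumrB => /le_trans; apply.
by apply: ler_sum => n _; apply: lnB_le_divB1; [exact: q_gt0 | exact: QB_gt0].
Qed.

Lemma re_mxtrace_tyler K : re (\tr (K *m (tyler_sum *m B))) = \sum_n alpha K n / q B n.
Proof.
rewrite /tyler_sum mulmx_suml mulmx_sumr [\tr _]raddf_sum raddf_sum.
apply: eq_bigr => n _ /=.
have rank1 : \tr (K *m (x n *m adj (x n) *m B)) = hform B (x n) (K *m x n).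
  by rewrite /hform -trace_mx11 [in LHS]mxtrace_mulC -!mulmxA [in LHS]mxtrace_mulC !mulmxA.
by rewrite -scalemxAl -scalemxAr mxtraceZ rank1 [in LHS]hformB_real -fmorphV re_embM mulrC.
Qed.

Lemma tyler_conj_offdiag0 P : P \in unitmx -> forall i j, i != j ->
  (invmx P *m (tyler_sum *m B) *m P) i j = 0.
Proof.
move=> uP i j ij; rewrite -mxtrace_conj_delta_mul; apply: re_nondeg => s.
rewrite -mxtraceZ scalemxAl re_mxtrace_tyler first_variation0 // => c.
by rewrite scalerA det_conj_transvection // eq_sym.
Qed.

Lemma mxtrace_tyler : \tr (tyler_sum *m B) = N%:R.
Proof.
rewrite /tyler_sum mulmx_suml [\tr _]raddf_sum -[N in N%:R]card_ord -sumr_const.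
apply: eq_bigr => n _ /=; rewrite -scalemxAl mxtraceZ -mulmxA mxtrace_mulC trace_mx11.
by rewrite mulVf // hformB_real fmorph_eq0 gt_eqF.
Qed.

Theorem tyler_fixed_point : exists2 c : R, 0 < c & Rs = emb c *: tyler_sum.
Proof.
have [lambda SBE] := is_scalar_mxP (scalar_mx_of_conj_offdiag0 tyler_conj_offdiag0).
have dlambda : lambda *+ d = N%:R by rewrite -mxtrace_scalar -SBE mxtrace_tyler.
have uRs : Rs \in unitmx := HPd1_unitmx HRs.
have SE : tyler_sum = lambda *: Rs by rewrite -mul_scalar_mx -SBE mulmxKV.
exists (d%:R / N%:R); first by rewrite divr_gt0 ?ltr0n.
rewrite SE scalerA fmorph_div !rmorph_nat mulrAC mulr_natl dlambda mulfV ?scale1r //.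
by rewrite pnatr_eq0 -lt0n.
Qed.

End TylerFixedPoint.

Lemma loglik_coef_gt0 (R : realFieldType) (k : R) d N : 0 < k -> (2 <= d)%N -> (0 < N)%N ->
  0 < k * ((d - 1)%:R / (2 * N)%:R).
Proof. by move=> k0 d2 N0; rewrite mulr_gt0 ?divr_gt0 ?ltr0n ?muln_gt0 ?subn_gt0. Qed.

Section RealCase.
Variable R : realType.

Lemma adj_idfun m n (A : 'M[R]_(m, n)) : adj idfun A = A^T.
Proof. exact: map_mx_id. Qed.

Lemma hform_idfun n (M : 'M[R]_n) y z : hform idfun M y z = (y^T *m M *m z) 0 0.
Proof. by rewrite /hform adj_idfun. Qed.

Lemma HPd1_idfun n (A : 'M[R]_n) : HPd1 idfun A <-> HPd_real A.
Proof.
rewrite /HPd1 /HPd_real /hermmx /posdefmx adj_idfun.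
by split=> -[-> [pA ->]]; split=> //; split=> // y /pA; rewrite hform_idfun.
Qed.

Lemma real_tyler_fixed_point d N (x : 'I_N -> 'cV[R]_d) (Rs : 'M[R]_d) :
  (2 <= d)%N -> (0 < N)%N -> (forall n, x n != 0) -> HPd_real Rs ->
  (forall A, HPd_real A -> l_real x A <= l_real x Rs) ->
  exists2 c : R, 0 < c &
    Rs = c *: \sum_(n < N) ((((x n)^T *m invmx Rs *m x n) 0 0)^-1 *: (x n *m (x n)^T)).
Proof.
move=> d_ge2 N_gt0 x_neq0 /HPd1_idfun HRs Rs_max.
have re_nondeg (z : R) : (forall s, s * z = 0) -> z = 0 by move/(_ 1); rewrite mul1r.
have sum_lnE M : \sum_n ln (hform idfun M (x n) (x n))
                 = \sum_n ln (((x n)^T *m M *m x n) 0 0).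
  by apply: eq_bigr => n _; rewrite hform_idfun.
have [A /HPd1_idfun /Rs_max|c c_gt0 RsE] :=
  tyler_fixed_point (conj := idfun) (emb := idfun) (re := idfun)
    (fun _ => erefl) (fun _ => erefl) (fun _ _ => erefl) (fun _ => erefl) (fun _ => id)
    (fun _ _ => erefl) re_nondeg N_gt0 (ltnW d_ge2) x_neq0 HRs.
  by rewrite /l_real ler_nM2l ?oppr_lt0 ?loglik_coef_gt0 //= !sum_lnE.
exists c => //; rewrite {1}RsE /tyler_sum; congr (_ *: _).
by apply: eq_bigr => n _; rewrite hform_idfun adj_idfun.
Qed.

End RealCase.

Section ComplexCase.
Variable R : realType.
Local Open Scope complex_scope.
Implicit Types (t : R) (z : R[i]).

Lemma Re_realcM t z : complex.Re (t%:C * z) = t * complex.Re z.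
Proof. by case: z => a b /=; rewrite mul0r subr0. Qed.

Lemma Re_conjc z : complex.Re z^* = complex.Re z.
Proof. by case: z. Qed.

Lemma Re_gt0 z : 0 < z -> 0 < complex.Re z.
Proof. by rewrite ltcE => /andP []. Qed.

Lemma Re_gt0_real z : 0 < z -> (complex.Re z)%:C = z.
Proof. by case: z => a b; rewrite ltcE /= => /andP [/eqP -> _]. Qed.

Lemma Re_mul_nondeg z : (forall s, complex.Re (s * z) = 0) -> z = 0.
Proof.
case: z => a b /(_ (a -i* b)) /= ReE.
have /eqP : a ^+ 2 + b ^+ 2 = 0 by rewrite -ReE; ring.
by rewrite paddr_eq0 ?sqr_ge0 // !sqrf_eq0 => /andP [/eqP -> /eqP ->].
Qed.

Lemma complex_tyler_fixed_point d N (x : 'I_N -> 'cV[R[i]]_d) (Rs : 'M[R[i]]_d) :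
  (2 <= d)%N -> (0 < N)%N -> (forall n, x n != 0) -> HPd_cplx Rs ->
  (forall A, HPd_cplx A -> l_cplx x A <= l_cplx x Rs) ->
  exists2 c : R, 0 < c &
    Rs = c%:C *: \sum_(n < N) (((cadj (x n) *m invmx Rs *m x n) 0 0)^-1 *: (x n *m cadj (x n))).
Proof.
move=> d_ge2 N_gt0 x_neq0 HRs Rs_max.
apply: (tyler_fixed_point (@conjcK R) (@conjc_real R) Re_realcM Re_conjc Re_gt0 Re_gt0_real
  Re_mul_nondeg N_gt0 (ltnW d_ge2) x_neq0 HRs) => A /Rs_max.
by rewrite /l_cplx ler_nM2l ?oppr_lt0 ?loglik_coef_gt0.
Qed.

End ComplexCase.

Theorem mainTheorem1 (R : realType) (d N : nat) (hd : (2 <= d)%N) (hN : (0 < N)%N) :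
  (* K = R *)
  (forall (x : 'I_N -> 'cV[R]_d) (Rs : 'M[R]_d),
     (forall n, x n != 0) ->
     HPd_real Rs ->
     (forall A : 'M[R]_d, HPd_real A -> l_real x A <= l_real x Rs) ->
     exists2 c : R, 0 < c &
       Rs = c *: \sum_(n < N)
               ((((x n)^T *m invmx Rs *m x n) 0 0)^-1 *: (x n *m (x n)^T)))
  /\
  (* K = C *)
  (forall (x : 'I_N -> 'cV[R[i]]_d) (Rs : 'M[R[i]]_d),
     (forall n, x n != 0) ->
     HPd_cplx Rs ->
     (forall A : 'M[R[i]]_d, HPd_cplx A -> l_cplx x A <= l_cplx x Rs) ->
     exists2 c : R, 0 < c &
       Rs = (c%:C)%C *: \sum_(n < N)
               (((cadj (x n) *m invmx Rs *m x n) 0 0)^-1 *: (x n *m cadj (x n)))).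
Proof.
by split=> x Rs; [exact: real_tyler_fixed_point | exact: complex_tyler_fixed_point].
Qed.
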